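(* Let $G$ be a Tanner graph representing the binary code $\mathcal{C}$, and let $G'$ be obtained from $G$ by adding redundant check nodes, i.e. new check nodes adjacent to existing variable nodes such that $G'$ represents the same code $\mathcal{C}$. Then every lift-realizable pseudocodeword of $G'$ is a lift-realizable pseudocodeword of $G$; that is, the set of lift-realizable pseudocodewords can only shrink when redundant check nodes are added.
   Context: A Tanner graph is a finite bipartite graph with variable nodes $v_1,\dots,v_n$ and check nodes; its code consists of all $x\in\{0,1\}^n$ with every check node having an even number of neighbours $v_i$ with $x_i=1$. A degree-$\ell$ lift replaces each node by $\ell$ copies and each edge by a perfect matching between copy-sets; a lift-realizable pseudocodeword $p\in\mathbb{Z}_{\ge0}^n$ is obtained from a codeword of the code of a finite lift by letting $p_i$ be the number of copies of $v_i$ assigned 1. *)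

From mathcomp Require Import all_boot all_fingroup.
Set Implicit Arguments. Unset Strict Implicit. Unset Printing Implicit Defensive.

(* A Tanner graph with variable nodes 'I_n and check nodes 'I_m is given by
   its adjacency relation H : 'I_m -> 'I_n -> bool  (H j i = check j is
   adjacent to variable i). *)
Definition tanner (m n : nat) := 'I_m -> 'I_n -> bool.

Definition codeword (m n : nat) (H : tanner m n) (x : 'I_n -> bool) : Prop :=
  forall j : 'I_m, ~~ odd #|[set i : 'I_n | H j i && x i]|.

(* Degree-l lift: node v becomes copies (v, a), a : 'I_l; the edge (j,i) is
   replaced by the perfect matching (j, a) -- (i, sigma j i a).
   (Permutations attached to non-edges are irrelevant.)
   A codeword of the lift is y : 'I_n -> 'I_l -> bool, y i b = value of copy b
   of v_i, with even parity at every check copy (j, a). *)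
Definition lift_codeword (m n l : nat) (H : tanner m n)
    (sigma : 'I_m -> 'I_n -> 'S_l) (y : 'I_n -> 'I_l -> bool) : Prop :=
  forall (j : 'I_m) (a : 'I_l),
    ~~ odd #|[set i : 'I_n | H j i && y i (sigma j i a)]|.

Definition lift_pseudocodeword (m n : nat) (H : tanner m n) (p : 'I_n -> nat)
    : Prop :=
  exists (l : nat) (sigma : 'I_m -> 'I_n -> 'S_l) (y : 'I_n -> 'I_l -> bool),
    0 < l /\ lift_codeword H sigma y /\
    forall i : 'I_n, p i = #|[set b : 'I_l | y i b]|.

From mathcomp Require Import all_boot all_fingroup.

(* Deleting check nodes from a lift of G' (those lying over the redundant
   checks) leaves a lift of G, and every codeword of the bigger lift is still a
   codeword of the smaller one, with the same number of copies of each v_i set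
   to 1. *)

Section CheckSubgraph.

Variables (m m' n : nat) (H : tanner m n) (H' : tanner m' n) (f : 'I_m -> 'I_m').
Hypothesis H'_f : forall (j : 'I_m) (i : 'I_n), H' (f j) i = H j i.

Lemma lift_codeword_subgraph (l : nat) (sigma : 'I_m' -> 'I_n -> 'S_l)
    (y : 'I_n -> 'I_l -> bool) :
  lift_codeword H' sigma y -> lift_codeword H (fun j => sigma (f j)) y.
Proof.
move=> y_cw j a; have := y_cw (f j) a.
suff -> : [set i | H' (f j) i && y i (sigma (f j) i a)]
        = [set i | H j i && y i (sigma (f j) i a)] by [].
by apply/setP=> i; rewrite !inE H'_f.
Qed.

Lemma lift_pseudocodeword_subgraph (p : 'I_n -> nat) :
  lift_pseudocodeword H' p -> lift_pseudocodeword H p.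
Proof.
move=> [l [sigma [y [l_gt0 [y_cw p_def]]]]].
exists l, (fun j => sigma (f j)), y.
by split; [|split; [exact: lift_codeword_subgraph|]].
Qed.

End CheckSubgraph.

Theorem theorem11 (m k n : nat) (H : tanner m n) (H' : tanner (m + k) n) :
  (forall (j : 'I_m) (i : 'I_n), H' (lshift k j) i = H j i) ->
  (forall x : 'I_n -> bool, codeword H x <-> codeword H' x) ->
  forall p : 'I_n -> nat, lift_pseudocodeword H' p -> lift_pseudocodeword H p.
Proof. by move=> H'_lshift _; exact: lift_pseudocodeword_subgraph H'_lshift. Qed.
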